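(* Let $X$, $Z$ be topological vector spaces, $C\subseteq Z$ a nonempty closed convex cone with $C^-\neq\{0\}$, and $f:X\to\mathcal{F}(Z,C)$ convex. If $f$ is efficient at $x_0\in X$, then $f$ is lower continuous at $x_0$.
   Context: $\mathcal{F}(Z,C)=\{A\subseteq Z\colon A=\operatorname{cl}(A+C)\}$ (empty set included); $C^-=\{z^*\in Z^*\colon z^*(z)\le0\ \forall z\in C\}$. $f$ is convex iff $tf(x_1)+(1-t)f(x_2)\subseteq f(tx_1+(1-t)x_2)$ for all $x_1,x_2\in X$, $t\in(0,1)$. $f$ is efficient at $x_0$ iff there exist a neighborhood $U$ of $x_0$ and a bounded set $B\subseteq Z$ (absorbed by every neighborhood of $0$) with $f(x)\cap B\neq\emptyset$ for all $x\in U$. $f$ is lower continuous at $x_0$ iff for every $z_0\in f(x_0)$ and every neighborhood $V$ of $z_0$ there is a neighborhood $U$ of $x_0$ with $f(x)\cap V\neq\emptyset$ for all $x\in U$. *)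

From HB Require Import structures.
From mathcomp Require Import all_boot all_order all_algebra.
From mathcomp Require Import all_classical all_reals all_analysis.
Set Implicit Arguments. Unset Strict Implicit. Unset Printing Implicit Defensive.
Import Order.TTheory GRing.Theory Num.Theory.
Local Open Scope classical_set_scope.
Local Open Scope ring_scope.

Section defs.
Context {R : realType}.

Definition set_add {Z : lmodType R} (A B : set Z) : set Z :=
  [set z | exists a b, A a /\ B b /\ z = a + b].

Definition set_scale {Z : lmodType R} (t : R) (A : set Z) : set Z :=
  [set t *: a | a in A].

Definition convex_cone {Z : lmodType R} (C : set Z) : Prop :=
  (forall t z, 0 < t -> C z -> C (t *: z)) /\
  (forall t x y, 0 <= t <= 1 -> C x -> C y -> C (t *: x + (1 - t) *: y)).

(* C^- <> {0} : some nonzero continuous linear functional z* on Z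
   satisfies z*(z) <= 0 for all z in C *)
Definition negative_dual_nontrivial {Z : topologicalLmodType R} (C : set Z)
  : Prop :=
  exists zs : {linear Z -> R^o},
    continuous (zs : Z -> R^o) /\ (exists z, zs z != 0) /\
    (forall z, C z -> zs z <= 0).

Definition in_FZC {Z : topologicalLmodType R} (C : set Z) (A : set Z) : Prop :=
  A = closure (set_add A C).

Definition sv_convex {X Z : lmodType R} (f : X -> set Z) : Prop :=
  forall x1 x2 t, 0 < t < 1 ->
    set_add (set_scale t (f x1)) (set_scale (1 - t) (f x2))
      `<=` f (t *: x1 + (1 - t) *: x2).

Definition tvs_bounded {Z : topologicalLmodType R} (B : set Z) : Prop :=
  forall V, nbhs (0 : Z) V -> exists r : R, forall t, r < t -> B `<=` set_scale t V.

Definition sv_efficient_at {X Z : topologicalLmodType R} (f : X -> set Z) (x0 : X)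
  : Prop :=
  exists U B, nbhs x0 U /\ tvs_bounded B /\
    forall x, U x -> f x `&` B !=set0.

Definition sv_lower_continuous_at {X Z : topologicalLmodType R}
  (f : X -> set Z) (x0 : X) : Prop :=
  forall z0, f x0 z0 -> forall V, nbhs z0 V ->
    exists U, nbhs x0 U /\ forall x, U x -> f x `&` V !=set0.

End defs.

From HB Require Import structures.
From mathcomp Require Import all_boot all_order all_algebra.
From mathcomp Require Import all_classical all_reals all_analysis.
From mathcomp Require Import lra.
Set Implicit Arguments. Unset Strict Implicit. Unset Printing Implicit Defensive.
Import Order.TTheory GRing.Theory Num.Theory.
Local Open Scope classical_set_scope.
Local Open Scope ring_scope.

(* Let z0 be in f x0 and 0 < t < 1 be small. For x near x0 the point
   x' = x0 + (x - x0) / t is still in the efficiency neighbourhood, so f x'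
   meets the bounded set B, say at b, and convexity puts
   t b + (1 - t) z0 = z0 + t b - t z0 in f x. Since B is bounded, t B is as
   small as we like, hence this point lies in any given neighbourhood of z0. *)

Section TopologicalLmodule.
Context {R : numFieldType} {X : topologicalLmodType R}.

Lemma dilation_continuous (x0 : X) (s : R) :
  continuous (fun x => s *: (x - x0) + x0).
Proof.
move=> x; apply: (continuous2_cvg _ (h := +%R)).
- exact: (add_continuous (_, _)).
- apply: (continuous2_cvg _ (h := fun k y => k *: y) (f := fun=> s : R^o)).
  + exact: (scale_continuous (_, _)).
  + exact: cvg_cst.
  + apply: (continuous2_cvg _ (h := fun y z => y - z)).
    * exact: (@sub_continuous X (x, x0)).
    * exact: cvg_id.
    * exact: cvg_cst.
- exact: cvg_cst.
Qed.

Lemma nbhs_dilation (x0 : X) (s : R) (U : set X) :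
  nbhs x0 U -> nbhs x0 [set x | U (s *: (x - x0) + x0)].
Proof.
by move=> Ux0; apply: (@dilation_continuous x0 s x0); rewrite subrr scaler0 add0r.
Qed.

Lemma nbhs_shrink_center (z0 : X) (V : set X) : nbhs z0 V ->
  exists2 e : R, 0 < e & exists2 W, nbhs 0 W &
    forall t w, `|t| < e -> W w -> V (w + (1 - t) *: z0).
Proof.
pose g (p : R^o * X) := p.2 + (1 - p.1) *: z0.
have g_cont : {for (0, 0), continuous g}.
  apply: (continuous2_cvg _ (h := +%R));
    [exact: (add_continuous (_, _))|exact: cvg_snd|].
  apply: (continuous2_cvg _ (h := fun (k : R^o) (y : X) => k *: y)
    (f := fun p : R^o * X => 1 - p.1) (g := fun=> z0)).
  - exact: (scale_continuous (_, _)).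
  - apply: (continuous2_cvg _ (h := fun y z : R^o => y - z)).
    + exact: (@sub_continuous R^o (1, 0)).
    + exact: cvg_cst.
    + exact: cvg_fst.
  - exact: cvg_cst.
move=> Vz0; have /g_cont : nbhs (g (0, 0)) V by rewrite /g /= add0r subr0 scale1r.
move=> [[A W] [/= /nbhs_ballP [e e0 eA] W0] AW].
exists e => //; exists W => // t w te Ww; apply: (AW (t, w)); split => //=.
by apply: eA; rewrite /ball /= sub0r normrN.
Qed.

End TopologicalLmodule.

Lemma small_with_large_inverse (R : realFieldType) (r e : R) : 0 < e ->
  exists t : R, [/\ 0 < t < 1, t < e & r < t^-1].
Proof.
move=> e_gt0; have ei_gt0 : 0 < e^-1 by rewrite invr_gt0.
have r_le := ler_norm r; have r_ge0 := normr_ge0 r.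
pose s := `|r| + 1 + e^-1.
have s_gt1 : 1 < s by rewrite /s; lra.
have s_gt0 : 0 < s by lra.
exists s^-1; rewrite invr_gt0 s_gt0 invf_lt1 // invf_plt ?posrE // invrK.
by split; rewrite /s; lra.
Qed.

Lemma sv_convex_dilation_mem (R : realType) (X Z : lmodType R)
  (f : X -> set Z) (x0 x : X) (t : R) (b z0 : Z) :
  sv_convex f -> 0 < t < 1 ->
  f (t^-1 *: (x - x0) + x0) b -> f x0 z0 -> f x (t *: b + (1 - t) *: z0).
Proof.
move=> fconv /[dup] t01 /andP[t0 _] fb fz0.
have -> : x = t *: (t^-1 *: (x - x0) + x0) + (1 - t) *: x0.
  rewrite scalerDr scalerA mulfV ?gt_eqF // scale1r scalerBl scale1r.
  by rewrite addrA addrAC addrK subrK.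
by apply: fconv => //; exists (t *: b), ((1 - t) *: z0); do !split; [exists b|exists z0].
Qed.

Theorem mainTheorem3 (R : realType) (X Z : topologicalLmodType R)
  (C : set Z) (f : X -> set Z) (x0 : X) :
  C !=set0 -> closed C -> convex_cone C -> negative_dual_nontrivial C ->
  (forall x, in_FZC C (f x)) -> sv_convex f ->
  sv_efficient_at f x0 -> sv_lower_continuous_at f x0.
Proof.
move=> _ _ _ _ _ fconv [U [B [Ux0 [Bbd UB]]]] z0 fz0 V /nbhs_shrink_center.
move=> [e e0 [W W0 VW]].
have [r Br] := Bbd W W0.
have [t [t01 te rt]] := small_with_large_inverse r e0.
exists [set x | U (t^-1 *: (x - x0) + x0)]; split; first exact: nbhs_dilation.
move=> x /UB [b [fb /(Br _ rt) [w Ww wb]]]; rewrite -wb in fb.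
exists (t *: (t^-1 *: w) + (1 - t) *: z0).
split; first exact: (sv_convex_dilation_mem fconv t01 fb fz0).
case/andP: t01 => t0 _.
by rewrite scalerA mulfV ?gt_eqF // scale1r; apply: VW; rewrite ?gtr0_norm.
Qed.
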